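(* For any set $X$, the free left Ehresmann monoid $\mathrm{FLE}(X)$ on $X$ can be equipped with a unary operation $*$ making it a $*$-left Ehresmann monoid (with $a^*$ the least right identity of $a$ among the projections).
   Context: A left Ehresmann monoid is a monoid with a unary operation $a\mapsto a^+$ satisfying $x^+x=x$, $(x^+y^+)^+=x^+y^+$, $x^+y^+=y^+x^+$, $(xy)^+=(xy^+)^+$; these form a variety of algebras of type $(2,1,0)$, and $\mathrm{FLE}(X)$ is the free object on $X$ in it. Its projections are $E=\{a^+\}$. A $*$-left Ehresmann monoid is a monoid with two unary operations $+,*$ such that $(M,+)$ is left Ehresmann, $M$ satisfies $xx^*=x$, $(x^* )^*=x^*$, $x^*y^*=y^*x^*$, $(xy^* )^*y^*=(xy^* )^*$, and $(x^* )^+=x^*$, $(x^+)^*=x^+$. *)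

Definition is_left_ehresmann (M : Type) (mul : M -> M -> M) (one : M)
  (plus : M -> M) : Prop :=
  (forall x y z, mul x (mul y z) = mul (mul x y) z) /\
  (forall x, mul one x = x) /\
  (forall x, mul x one = x) /\
  (forall x, mul (plus x) x = x) /\
  (forall x y, plus (mul (plus x) (plus y)) = mul (plus x) (plus y)) /\
  (forall x y, mul (plus x) (plus y) = mul (plus y) (plus x)) /\
  (forall x y, plus (mul x y) = plus (mul x (plus y))).

Definition is_LE_hom (M : Type) (mul : M -> M -> M) (one : M) (plus : M -> M)
  (N : Type) (mulN : N -> N -> N) (oneN : N) (plusN : N -> N) (h : M -> N) : Prop :=
  (forall x y, h (mul x y) = mulN (h x) (h y)) /\
  h one = oneN /\
  (forall x, h (plus x) = plusN (h x)).

Definition is_free_left_ehresmann (X : Type) (M : Type) (mul : M -> M -> M)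
  (one : M) (plus : M -> M) (i : X -> M) : Prop :=
  is_left_ehresmann M mul one plus /\
  forall (N : Type) (mulN : N -> N -> N) (oneN : N) (plusN : N -> N),
    is_left_ehresmann N mulN oneN plusN ->
    forall f : X -> N,
      exists h : M -> N,
        is_LE_hom M mul one plus N mulN oneN plusN h /\
        (forall x, h (i x) = f x) /\
        (forall h' : M -> N,
            is_LE_hom M mul one plus N mulN oneN plusN h' ->
            (forall x, h' (i x) = f x) -> forall m, h' m = h m).

Definition is_star_left_ehresmann (M : Type) (mul : M -> M -> M) (one : M)
  (plus star : M -> M) : Prop :=
  is_left_ehresmann M mul one plus /\
  (forall x, mul x (star x) = x) /\
  (forall x, star (star x) = star x) /\
  (forall x y, mul (star x) (star y) = mul (star y) (star x)) /\
  (forall x y, mul (star (mul x (star y))) (star y) = star (mul x (star y))) /\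
  (forall x, plus (star x) = star x) /\
  (forall x, star (plus x) = plus x).

Definition is_projection (M : Type) (plus : M -> M) (e : M) : Prop :=
  exists a, e = plus a.

Definition proj_le (M : Type) (mul : M -> M -> M) (e f : M) : Prop :=
  e = mul e f.

Definition least_right_identity_proj (M : Type) (mul : M -> M -> M)
  (plus : M -> M) (a s : M) : Prop :=
  is_projection M plus s /\ mul a s = a /\
  (forall e, is_projection M plus e -> mul a e = a -> proj_le M mul s e).

(* Tag each element a of a left Ehresmann monoid with a projection right
   identity s of a and a length n, the number of generators in a word for a,
   where length 0 forces a to be a projection and s = a.  Tagged elements form
   a left Ehresmann monoid, and the generator x is tagged (x, 1, 1).  By
   freeness this tagging extends to a morphism h from FLE(X) which is a section
   of the forgetful map, and a^* is the projection component of h a.  For a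
   projection e with a e = a, since e has length 0 we get
   a^* = (a e)^* = a^* e, so a^* is the least such right identity. *)

From Stdlib Require Import ProofIrrelevance Arith.

Set Implicit Arguments.

Section LeftEhresmann.

Variables (M : Type) (mul : M -> M -> M) (one : M) (plus : M -> M).
Hypothesis LE : is_left_ehresmann M mul one plus.

Lemma mulA x y z : mul x (mul y z) = mul (mul x y) z.
Proof. apply LE. Qed.

Lemma mul1m x : mul one x = x.
Proof. apply LE. Qed.

Lemma mulm1 x : mul x one = x.
Proof. apply LE. Qed.

Lemma mul_plus_l x : mul (plus x) x = x.
Proof. apply LE. Qed.

Lemma plus_one : plus one = one.
Proof. rewrite <- (mulm1 (plus one)). apply mul_plus_l. Qed.

Lemma plus_idem a : plus (plus a) = plus a.
Proof.
  destruct LE as (_ & _ & _ & _ & Hpp & _).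
  rewrite <- (mulm1 (plus a)) at 1 2. rewrite <- plus_one. apply Hpp.
Qed.

Section Projections.

Variables u v : M.
Hypotheses (Hu : plus u = u) (Hv : plus v = v).

Lemma proj_comm : mul u v = mul v u.
Proof. rewrite <- Hu, <- Hv. apply LE. Qed.

Lemma proj_mul : plus (mul u v) = mul u v.
Proof. rewrite <- Hu, <- Hv. apply LE. Qed.

Lemma proj_idem : mul u u = u.
Proof. rewrite <- Hu at 1. apply mul_plus_l. Qed.

End Projections.

Definition tag_spec (a s : M) (n : nat) : Prop :=
  plus s = s /\ mul a s = a /\ (n = 0 -> s = a /\ plus a = a).

Record tagged := Tagged
  { elt : M; rid : M; len : nat; taggedP : tag_spec elt rid len }.
Arguments Tagged : clear implicits.

Lemma tagged_eq (x y : tagged) :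
  elt x = elt y -> rid x = rid y -> len x = len y -> x = y.
Proof.
  destruct x, y; simpl; intros; subst. f_equal. apply proof_irrelevance.
Qed.

Definition rid_mul (s t : M) (n : nat) : M :=
  match n with 0 => mul s t | S _ => t end.

Lemma tag_spec_mul {a s m b t n} :
  tag_spec a s m -> tag_spec b t n -> tag_spec (mul a b) (rid_mul s t n) (m + n).
Proof.
  intros (Hs & Has & Hm) (Ht & Hbt & Hn).
  destruct n as [|n]; simpl.
  - destruct (Hn eq_refl) as [-> Hb]. split; [|split].
    + now apply proj_mul.
    (* (a b)(s b) = a (s b) b = a b *)
    + rewrite <- mulA, (mulA b s b), (proj_comm Hb Hs), <- (mulA s b b),
        (proj_idem Hb), mulA, Has; reflexivity.
    + intros E. destruct m; [|discriminate].
      destruct (Hm eq_refl) as [-> Ha]. split; [reflexivity|]. now apply proj_mul.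
  - split; [|split]; auto.
    + now rewrite <- mulA, Hbt.
    + rewrite Nat.add_succ_r. discriminate.
Qed.

Lemma tag_spec_plus a : tag_spec (plus a) (plus a) 0.
Proof. split; [|split]; auto using plus_idem, proj_idem. Qed.

Lemma tag_spec_one : tag_spec one one 0.
Proof. split; [|split]; auto using plus_one, mulm1. Qed.

Lemma tag_spec_gen x : tag_spec x one 1.
Proof. split; [|split]; auto using plus_one, mulm1. discriminate. Qed.

Definition tmul (x y : tagged) : tagged :=
  Tagged (mul (elt x) (elt y)) (rid_mul (rid x) (rid y) (len y)) (len x + len y)
    (tag_spec_mul (taggedP x) (taggedP y)).

Definition tplus (x : tagged) : tagged :=
  Tagged (plus (elt x)) (plus (elt x)) 0 (tag_spec_plus (elt x)).

Definition tone : tagged := Tagged one one 0 tag_spec_one.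

Definition tgen (x : M) : tagged := Tagged x one 1 (tag_spec_gen x).

Lemma tagged_left_ehresmann : is_left_ehresmann tagged tmul tone tplus.
Proof.
  split; [|split; [|split; [|split; [|split; [|split]]]]].
  - intros [a s m ?] [b t n ?] [c u p ?]. apply tagged_eq; simpl.
    + apply mulA.
    + destruct n, p; simpl; auto using mulA.
    + apply Nat.add_assoc.
  - intros [b t [|n] ?]; apply tagged_eq; simpl; auto using mul1m.
  - intros x. apply tagged_eq; simpl; auto using mulm1.
  - intros [a s m Ha]. apply tagged_eq; simpl; auto using mul_plus_l.
    destruct m; simpl; auto.
    destruct Ha as (_ & _ & Hm). destruct (Hm eq_refl) as [-> _]. apply mul_plus_l.
  - intros x y. apply tagged_eq; simpl; auto using proj_mul, plus_idem.
  - intros x y. apply tagged_eq; simpl; auto using proj_comm, plus_idem.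
  - intros x y. apply tagged_eq; simpl; auto; apply LE.
Qed.

Lemma elt_hom : is_LE_hom tagged tmul tone tplus M mul one plus elt.
Proof. split; [|split]; reflexivity. Qed.

Section TaggingSection.

Variable h : M -> tagged.
Hypothesis h_hom : is_LE_hom M mul one plus tagged tmul tone tplus h.
Hypothesis elt_h : forall a, elt (h a) = a.

Let star a := rid (h a).

Lemma len_plus a : len (h (plus a)) = 0.
Proof. destruct h_hom as (_ & _ & ->). reflexivity. Qed.

Lemma star_plus a : star (plus a) = plus a.
Proof. unfold star. destruct h_hom as (_ & _ & ->). simpl. now rewrite elt_h. Qed.

Lemma star_mul a b : star (mul a b) = rid_mul (star a) (star b) (len (h b)).
Proof. unfold star. destruct h_hom as (-> & _). reflexivity. Qed.

Lemma star_proj a : plus (star a) = star a.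
Proof. destruct (taggedP (h a)) as (Hs & _). exact Hs. Qed.

Lemma mul_star a : mul a (star a) = a.
Proof. destruct (taggedP (h a)) as (_ & Has & _). now rewrite elt_h in Has. Qed.

Lemma star_idem a : star (star a) = star a.
Proof. rewrite <- (star_proj a) at 1 2. apply star_plus. Qed.

Lemma len_star a : len (h (star a)) = 0.
Proof. rewrite <- star_proj. apply len_plus. Qed.

Lemma star_mul_proj a c : star (mul a (plus c)) = mul (star a) (plus c).
Proof. now rewrite star_mul, len_plus, star_plus. Qed.

Lemma star_left_ehresmann_of_section :
  is_star_left_ehresmann M mul one plus star.
Proof.
  split; [exact LE|]. split; [|split; [|split; [|split; [|split]]]].
  - exact mul_star.
  - exact star_idem.
  - intros x y. apply proj_comm; apply star_proj.
  - intros x y. rewrite star_mul, len_star, star_idem; simpl.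
    rewrite <- mulA, proj_idem; auto using star_proj.
  - exact star_proj.
  - exact star_plus.
Qed.

Lemma star_least_right_identity a :
  least_right_identity_proj M mul plus a (star a).
Proof.
  split; [|split].
  - exists (star a). now rewrite star_proj.
  - apply mul_star.
  - intros e [c ->] Hac. unfold proj_le.
    now rewrite <- star_mul_proj, Hac.
Qed.

End TaggingSection.

End LeftEhresmann.

Lemma LE_hom_comp (M N P : Type) mulM oneM plusM mulN oneN plusN mulP oneP plusP
  (f : M -> N) (g : N -> P) :
  is_LE_hom M mulM oneM plusM N mulN oneN plusN f ->
  is_LE_hom N mulN oneN plusN P mulP oneP plusP g ->
  is_LE_hom M mulM oneM plusM P mulP oneP plusP (fun m => g (f m)).
Proof.
  intros (fm & f1 & fp) (gm & g1 & gp). split; [|split].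
  - intros x y. now rewrite fm, gm.
  - now rewrite f1, g1.
  - intros x. now rewrite fp, gp.
Qed.

Lemma free_endo_id X M mul one plus (i : X -> M) (f : M -> M) :
  is_free_left_ehresmann X M mul one plus i ->
  is_LE_hom M mul one plus M mul one plus f -> (forall x, f (i x) = i x) ->
  forall m, f m = m.
Proof.
  intros [LE U] f_hom fi m.
  destruct (U _ _ _ _ LE i) as (h0 & _ & _ & h0_unique).
  rewrite (h0_unique f), (h0_unique (fun m => m)); auto.
  split; [|split]; reflexivity.
Qed.

Theorem mainTheorem3 (X : Type) (M : Type) (mul : M -> M -> M) (one : M)
  (plus : M -> M) (i : X -> M) :
  is_free_left_ehresmann X M mul one plus i ->
  exists star : M -> M,
    is_star_left_ehresmann M mul one plus star /\
    (forall a, least_right_identity_proj M mul plus a (star a)).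
Proof.
  intros Hfree. pose proof Hfree as [LE U].
  destruct (U _ _ _ _ (tagged_left_ehresmann LE) (fun x => tgen LE (i x)))
    as (h & h_hom & h_gen & _).
  assert (elt_h : forall a, elt (h a) = a).
  { apply (free_endo_id Hfree).
    - exact (LE_hom_comp h_hom (elt_hom LE)).
    - intros x. now rewrite h_gen. }
  exists (fun a => rid (h a)). split.
  - exact (star_left_ehresmann_of_section h_hom elt_h).
  - exact (star_least_right_identity h_hom elt_h).
Qed.
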